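(* Let $t_\varepsilon$, $t$, $s_\varepsilon$, $s$ be as defined below. Then $\partial_Ut_\varepsilon\to\partial_Ut$ and $\partial_Us_\varepsilon\to\partial_Us$ as $\varepsilon\to0$, uniformly on compact subsets of $\{(U,X^1,X^2,V)\in\mathbb{R}^4: U\neq0\}=(\mathbb{R}\setminus\{0\})\times\mathbb{R}^3$.
   Context: Strict delta net: a net $(\delta_\varepsilon)_{\varepsilon\in(0,1]}$ of smooth compactly supported functions on $\mathbb{R}$ with $\operatorname{supp}\delta_\varepsilon\subseteq[-\varepsilon,\varepsilon]$, $\int\delta_\varepsilon\to1$ as $\varepsilon\to0$, and $\int|\delta_\varepsilon|\le C$ for some $C>0$ and small $\varepsilon$. The transformations: fix $f\in C^\infty(\mathbb{R}^2,\mathbb{R})$ and a strict delta net $(\delta_\varepsilon)_\varepsilon$; write $X=(X^1,X^2)$. Let $(x_\varepsilon)_\varepsilon=(x_\varepsilon^1,x_\varepsilon^2)_\varepsilon\in C^\infty(\mathbb{R}^2\times\mathbb{R},\mathbb{R}^2)^{(0,1]}$ be a fixed net such that for every compact $K\subseteq\mathbb{R}^2$ there is $\varepsilon_K$ such that for all $X\in K$ and $\varepsilon\le\varepsilon_K$, $U\mapsto x_\varepsilon(X,U)$ is the solution on all of $\mathbb{R}$ of $\partial_U^2x_\varepsilon^i(X,U)=\frac12\partial_if(x_\varepsilon(X,U))\,\delta_\varepsilon(U)$, $x_\varepsilon^i(X,-1)=X^i$, $\partial_Ux_\varepsilon^i(X,-1)=0$ ($i=1,2$) (such a net exists). Write $\dot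 x_\varepsilon^i=\partial_U x_\varepsilon^i$. Define $$w_\varepsilon(X,V,U)=V+\int_{-\varepsilon}^U\int_{-\varepsilon}^s\sum_{i=1}^2\partial_if(x_\varepsilon(X,r))\,\dot x_\varepsilon^i(X,r)\,\delta_\varepsilon(r)\,dr\,ds,\qquad v_\varepsilon(X,V,U)=w_\varepsilon(X,V,U)+\int_{-\varepsilon}^U f(x_\varepsilon(X,s))\delta_\varepsilon(s)\,ds,$$ $t_\varepsilon(U,X^1,X^2,V)=(U,x_\varepsilon^1(X,U),x_\varepsilon^2(X,U),v_\varepsilon(X,V,U))$ and $s_\varepsilon(U,X^1,X^2,V)=(U,x_\varepsilon^1(X,U),x_\varepsilon^2(X,U),w_\varepsilon(X,V,U))$. The limits: with $U_+=\max(U,0)$ and $H$ the Heaviside function ($H(U)=0$ for $U<0$, $H(U)=1$ for $U>0$), $x^i(X,U)=X^i+\frac12\partial_if(X)\,U_+$, $v(X,V,U)=V+f(X)H(U)+\frac14\sum_{i=1}^2(\partial_if(X))^2U_+$, $w(X,V,U)=V+\frac14\sum_{i=1}^2(\partial_if(X))^2U_+$, $t(U,X^1,X^2,V)=(U,x^1(X,U),x^2(X,U),v(X,V,U))$, $s(U,X^1,X^2,V)=(U,x^1(X,U),x^2(X,U),w(X,V,U))$; these are smooth for $U\ne0$. *)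

From Stdlib Require Import Reals List ClassicalEpsilon.
Open Scope R_scope.

(** Derivative operator: the derivative of g at u when it exists
    (unique by uniqueness of limits), an arbitrary value otherwise. *)
Definition Deriv (g : R -> R) (u : R) : R :=
  epsilon (inhabits 0) (fun l => derivable_pt_lim g u l).

(** Oriented Riemann integral int_a^b g (unspecified if g is not Riemann integrable;
    all integrands used below are continuous). RiemannInt does not depend on
    the integrability proof. *)
Definition Rint (g : R -> R) (a b : R) : R :=
  epsilon (inhabits 0)
    (fun I => exists pr : Riemann_integrable g a b, RiemannInt pr = I).

Fixpoint Ck1 (k : nat) (g : R -> R) : Prop :=
  match k with
  | O => continuity g
  | S k' => (forall u, derivable_pt_lim g u (Deriv g u)) /\ Ck1 k' (Deriv g)
  end.
Definition smooth1 (g : R -> R) : Prop := forall k, Ck1 k g.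

Definition P1_2 (f : R -> R -> R) (a b : R) : R := Deriv (fun s => f s b) a.
Definition P2_2 (f : R -> R -> R) (a b : R) : R := Deriv (fun s => f a s) b.

Definition cont2 (f : R -> R -> R) : Prop :=
  forall a b eta, 0 < eta -> exists d, 0 < d /\
    forall a' b', Rabs (a' - a) < d -> Rabs (b' - b) < d ->
      Rabs (f a' b' - f a b) < eta.

Fixpoint Ck2 (k : nat) (f : R -> R -> R) : Prop :=
  match k with
  | O => cont2 f
  | S k' =>
      (forall a b, derivable_pt_lim (fun s => f s b) a (P1_2 f a b)) /\
      (forall a b, derivable_pt_lim (fun s => f a s) b (P2_2 f a b)) /\
      Ck2 k' (P1_2 f) /\ Ck2 k' (P2_2 f)
  end.
Definition smooth2 (f : R -> R -> R) : Prop := forall k, Ck2 k f.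

Definition P1_3 (g : R -> R -> R -> R) (a b c : R) : R := Deriv (fun s => g s b c) a.
Definition P2_3 (g : R -> R -> R -> R) (a b c : R) : R := Deriv (fun s => g a s c) b.
Definition P3_3 (g : R -> R -> R -> R) (a b c : R) : R := Deriv (fun s => g a b s) c.

Definition cont3 (g : R -> R -> R -> R) : Prop :=
  forall a b c eta, 0 < eta -> exists d, 0 < d /\
    forall a' b' c', Rabs (a' - a) < d -> Rabs (b' - b) < d -> Rabs (c' - c) < d ->
      Rabs (g a' b' c' - g a b c) < eta.

Fixpoint Ck3 (k : nat) (g : R -> R -> R -> R) : Prop :=
  match k with
  | O => cont3 g
  | S k' =>
      (forall a b c, derivable_pt_lim (fun s => g s b c) a (P1_3 g a b c)) /\
      (forall a b c, derivable_pt_lim (fun s => g a s c) b (P2_3 g a b c)) /\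
      (forall a b c, derivable_pt_lim (fun s => g a b s) c (P3_3 g a b c)) /\
      Ck3 k' (P1_3 g) /\ Ck3 k' (P2_3 g) /\ Ck3 k' (P3_3 g)
  end.
Definition smooth3 (g : R -> R -> R -> R) : Prop := forall k, Ck3 k g.

Definition strict_delta_net (delta : R -> R -> R) : Prop :=
  (forall e, 0 < e <= 1 ->
     smooth1 (delta e) /\ (forall u, (u < - e \/ e < u) -> delta e u = 0)) /\
  (forall eta, 0 < eta -> exists e0, 0 < e0 /\
     forall e, 0 < e <= 1 -> e < e0 -> Rabs (Rint (delta e) (- e) e - 1) < eta) /\
  (exists C, 0 < C /\ exists e1, 0 < e1 /\
     forall e, 0 < e <= 1 -> e < e1 ->
       Rint (fun u => Rabs (delta e u)) (- e) e <= C).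

Definition compact_in {T : Type} (d : T -> T -> R) (K : T -> Prop) : Prop :=
  forall (I : Type) (O : I -> T -> Prop),
    (forall i p, O i p -> exists r, 0 < r /\ forall q, d p q < r -> O i q) ->
    (forall p, K p -> exists i, O i p) ->
    exists l : list I, forall p, K p -> exists i, In i l /\ O i p.

Definition dist2 (p q : R * R) : R :=
  Rmax (Rabs (fst p - fst q)) (Rabs (snd p - snd q)).

Definition pt4 : Type := (R * R * R * R)%type.
Definition pU (p : pt4) : R := let '(a, _, _, _) := p in a.
Definition pX1 (p : pt4) : R := let '(_, a, _, _) := p in a.
Definition pX2 (p : pt4) : R := let '(_, _, a, _) := p in a.
Definition pV (p : pt4) : R := let '(_, _, _, a) := p in a.
Definition dist4 (p q : pt4) : R :=
  Rmax (Rmax (Rabs (pU p - pU q)) (Rabs (pX1 p - pX1 q)))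
       (Rmax (Rabs (pX2 p - pX2 q)) (Rabs (pV p - pV q))).

Definition dU4 (F : pt4 -> pt4) (p : pt4) : pt4 :=
  let '(U, X1, X2, V) := p in
  (Deriv (fun u => pU (F (u, X1, X2, V))) U,
   Deriv (fun u => pX1 (F (u, X1, X2, V))) U,
   Deriv (fun u => pX2 (F (u, X1, X2, V))) U,
   Deriv (fun u => pV (F (u, X1, X2, V))) U).

Definition unif_cv_on_compacts (G : R -> pt4 -> pt4) (g : pt4 -> pt4)
    (Dom : pt4 -> Prop) : Prop :=
  forall K, compact_in dist4 K -> (forall p, K p -> Dom p) ->
  forall eta, 0 < eta -> exists e0, 0 < e0 /\
    forall e p, 0 < e <= 1 -> e < e0 -> K p -> dist4 (G e p) (g p) < eta.

Section Transf.
Variables (f : R -> R -> R) (delta : R -> R -> R) (x1 x2 : R -> R -> R -> R -> R).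
(* x1 e X1 X2 U = x_eps^1(X, U), similarly x2 *)

Definition w_eps (e X1 X2 V U : R) : R :=
  V + Rint (fun s => Rint (fun r =>
        (P1_2 f (x1 e X1 X2 r) (x2 e X1 X2 r) * Deriv (x1 e X1 X2) r +
         P2_2 f (x1 e X1 X2 r) (x2 e X1 X2 r) * Deriv (x2 e X1 X2) r) * delta e r)
        (- e) s) (- e) U.

Definition v_eps (e X1 X2 V U : R) : R :=
  w_eps e X1 X2 V U +
  Rint (fun s => f (x1 e X1 X2 s) (x2 e X1 X2 s) * delta e s) (- e) U.

Definition t_eps (e : R) (p : pt4) : pt4 :=
  let '(U, X1, X2, V) := p in
  (U, x1 e X1 X2 U, x2 e X1 X2 U, v_eps e X1 X2 V U).

Definition s_eps (e : R) (p : pt4) : pt4 :=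
  let '(U, X1, X2, V) := p in
  (U, x1 e X1 X2 U, x2 e X1 X2 U, w_eps e X1 X2 V U).

Definition solves_ode (e X1 X2 : R) : Prop :=
  (forall U, derivable_pt_lim (Deriv (x1 e X1 X2)) U
               (/ 2 * P1_2 f (x1 e X1 X2 U) (x2 e X1 X2 U) * delta e U)) /\
  (forall U, derivable_pt_lim (Deriv (x2 e X1 X2)) U
               (/ 2 * P2_2 f (x1 e X1 X2 U) (x2 e X1 X2 U) * delta e U)) /\
  x1 e X1 X2 (-1) = X1 /\ x2 e X1 X2 (-1) = X2 /\
  Deriv (x1 e X1 X2) (-1) = 0 /\ Deriv (x2 e X1 X2) (-1) = 0.
End Transf.

Definition Uplus (U : R) : R := Rmax U 0.
(* Heaviside; the value at 0 is irrelevant (only U <> 0 is used) *)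
Definition Heav (U : R) : R := if Rlt_dec 0 U then 1 else 0.

Definition x1_lim (f : R -> R -> R) (X1 X2 U : R) : R := X1 + / 2 * P1_2 f X1 X2 * Uplus U.
Definition x2_lim (f : R -> R -> R) (X1 X2 U : R) : R := X2 + / 2 * P2_2 f X1 X2 * Uplus U.
Definition w_lim (f : R -> R -> R) (X1 X2 V U : R) : R :=
  V + / 4 * ((P1_2 f X1 X2) ^ 2 + (P2_2 f X1 X2) ^ 2) * Uplus U.
Definition v_lim (f : R -> R -> R) (X1 X2 V U : R) : R :=
  V + f X1 X2 * Heav U + / 4 * ((P1_2 f X1 X2) ^ 2 + (P2_2 f X1 X2) ^ 2) * Uplus U.

Definition t_lim (f : R -> R -> R) (p : pt4) : pt4 :=
  let '(U, X1, X2, V) := p in (U, x1_lim f X1 X2 U, x2_lim f X1 X2 U, v_lim f X1 X2 V U).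
Definition s_lim (f : R -> R -> R) (p : pt4) : pt4 :=
  let '(U, X1, X2, V) := p in (U, x1_lim f X1 X2 U, x2_lim f X1 X2 U, w_lim f X1 X2 V U).

(* Once the pulse [delta_eps] has passed, i.e. for [|U| > eps], the slope [x_eps'] is frozen:
   it vanishes before the pulse and equals [x_eps'(eps)] after it.  Along the ODE the double
   integral in [w_eps] integrates to [|x_eps'|^2], and the [f delta_eps] term of [v_eps] has zero
   derivative there, so [d_U t_eps = d_U s_eps = (1, x_eps', |x_eps'|^2)].  During the pulse a
   bootstrap keeps [x_eps] within [O(eps)] of [X], hence [grad f (x_eps) ~ grad f (X)] and
   [x_eps'(eps) ~ grad f (X) / 2 * int delta_eps ~ grad f (X) / 2], uniformly for [X] in a
   compact set; these are the [U]-derivatives of the limits for [U > 0], and both sides vanish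
   for [U < 0]. *)

From Stdlib Require Import Reals Lra List ClassicalEpsilon Classical.
Open Scope R_scope.

Lemma Deriv_unique g u l : derivable_pt_lim g u l -> Deriv g u = l.
Proof.
  intros Hl. unfold Deriv.
  assert (Hex : exists l, derivable_pt_lim g u l) by eauto.
  exact (uniqueness_limite _ _ _ _ (epsilon_spec (inhabits 0) _ Hex) Hl).
Qed.

Lemma continuity_derivable_pt_lim g g' :
  (forall u, derivable_pt_lim g u (g' u)) -> continuity g.
Proof. intros Hg x. apply derivable_continuous_pt. exists (g' x). apply Hg. Qed.

Lemma continuity_pt_eps g x : continuity_pt g x -> forall eps, 0 < eps ->
  exists d, 0 < d /\ forall y, Rabs (y - x) < d -> Rabs (g y - g x) < eps.
Proof.
  intros Hg eps Heps. destruct (Hg eps Heps) as [d [Hd Hd']]. exists d; split; [exact Hd|].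
  intros y Hy. destruct (Req_dec y x) as [->|Hne].
  - rewrite Rminus_diag, Rabs_R0; exact Heps.
  - apply (Hd' y). split; [split; [exact I|auto]|exact Hy].
Qed.

Lemma continuity_comp2 F g h : cont2 F -> continuity g -> continuity h ->
  continuity (fun r => F (g r) (h r)).
Proof.
  intros HF Hg Hh x eps Heps.
  destruct (HF (g x) (h x) eps Heps) as [d [Hd HFd]].
  destruct (continuity_pt_eps g x (Hg x) d Hd) as [dg [Hdg Hg']].
  destruct (continuity_pt_eps h x (Hh x) d Hd) as [dh [Hdh Hh']].
  exists (Rmin dg dh); split; [now apply Rmin_pos|].
  intros y [_ Hy]. apply HFd; [apply Hg'|apply Hh'];
    eapply Rlt_le_trans; eauto; [apply Rmin_l|apply Rmin_r].
Qed.

Lemma continuity_Rabs_comp g : continuity g -> continuity (fun s => Rabs (g s)).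
Proof. intros Hg x. exact (continuity_pt_comp g Rabs x (Hg x) (Rcontinuity_abs _)). Qed.

Lemma Riemann_integrable_continuity g a b : continuity g -> Riemann_integrable g a b.
Proof.
  intros Hg. destruct (Rle_dec a b).
  - apply continuity_implies_RiemannInt; auto.
  - apply RiemannInt_P1, continuity_implies_RiemannInt; [lra|auto].
Qed.

Lemma Rint_RiemannInt g a b (pr : Riemann_integrable g a b) : Rint g a b = RiemannInt pr.
Proof.
  unfold Rint.
  assert (Hex : exists I, exists pr : Riemann_integrable g a b, RiemannInt pr = I)
    by (exists (RiemannInt pr), pr; reflexivity).
  destruct (epsilon_spec (inhabits 0) _ Hex) as [pr' <-]. apply RiemannInt_P5.
Qed.

Lemma Rint_same g a : Rint g a a = 0.
Proof. rewrite (Rint_RiemannInt g a a (RiemannInt_P7 g a)). apply RiemannInt_P9. Qed.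

Lemma derivable_pt_lim_Rint g a U : continuity g ->
  derivable_pt_lim (fun u => Rint g a u) U (g U).
Proof.
  intros Hg. set (A := Rmin a U - 1). set (B := Rmax a U + 1).
  pose proof (Rmin_l a U). pose proof (Rmin_r a U).
  pose proof (Rmax_l a U). pose proof (Rmax_r a U).
  assert (HAB : A <= B) by (unfold A, B; lra).
  assert (HgAB : forall x, A <= x <= B -> continuity_pt g x) by (intros; apply Hg).
  pose proof (RiemannInt_P27 (f := g) (x := U) HAB HgAB ltac:(unfold A, B; lra)) as Hprim.
  set (prim := primitive HAB (FTC_P1 HAB HgAB)) in Hprim.
  apply derivable_pt_lim_locally_ext with (f := fun u => prim u - prim a) (a := A) (b := B);
    [unfold A, B; lra| |].
  - intros z Hz. unfold prim, primitive.
    destruct (Rle_dec A z) as [HAz|]; [|lra]. destruct (Rle_dec z B) as [HzB|]; [|lra].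
    destruct (Rle_dec A a) as [HAa|]; [|unfold A in *; lra].
    destruct (Rle_dec a B) as [HaB|]; [|unfold B in *; lra].
    rewrite (Rint_RiemannInt g a z (Riemann_integrable_continuity g a z Hg)),
      <- (RiemannInt_P26 (FTC_P1 HAB HgAB HAa HaB) (Riemann_integrable_continuity g a z Hg)
                         (FTC_P1 HAB HgAB HAz HzB)).
    ring.
  - replace (g U) with (g U - 0) by ring.
    apply derivable_pt_lim_minus; [exact Hprim|apply derivable_pt_lim_const].
Qed.

Lemma Rabs_le_iff x y : Rabs x <= y <-> - y <= x <= y.
Proof.
  split; [|apply Rabs_le].
  unfold Rabs; destruct (Rcase_abs x); intros; lra.
Qed.

Lemma Rabs_sqr_sub_le z a eps M : Rabs (z - a) <= eps -> Rabs a <= M / 2 -> eps <= 1 ->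
  Rabs (z * z - a * a) <= eps * (M + 1).
Proof.
  intros Hza Ha Heps. replace (z * z - a * a) with ((z - a) * ((z - a) + 2 * a)) by ring.
  rewrite Rabs_mult. pose proof (Rabs_triang (z - a) (2 * a)) as Htri.
  rewrite Rabs_mult, (Rabs_right 2) in Htri by lra.
  apply Rmult_le_compat; auto using Rabs_pos; lra.
Qed.

(* Apply the MVT to [Q - P] and to [Q + P]. *)
Lemma Rabs_increment_le P Q p q a b : a <= b ->
  (forall u, a <= u <= b -> derivable_pt_lim P u (p u)) ->
  (forall u, a <= u <= b -> derivable_pt_lim Q u (q u)) ->
  (forall u, a < u < b -> Rabs (p u) <= q u) ->
  Rabs (P b - P a) <= Q b - Q a.
Proof.
  intros Hab HP HQ Hpq. destruct (Req_dec a b) as [<-|Hne].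
  { rewrite !Rminus_diag, Rabs_R0; lra. }
  destruct (MVT_cor2 (fun x => Q x - P x) (fun x => q x - p x) a b ltac:(lra))
    as [c [Hc Hcab]].
  { intros u Hu. apply derivable_pt_lim_minus; auto. }
  destruct (MVT_cor2 (fun x => Q x + P x) (fun x => q x + p x) a b ltac:(lra))
    as [c' [Hc' Hcab']].
  { intros u Hu. apply derivable_pt_lim_plus; auto. }
  pose proof (Hpq c Hcab) as Hpc. pose proof (Hpq c' Hcab') as Hpc'.
  apply Rabs_le_iff in Hpc, Hpc'. apply Rabs_le_iff. nra.
Qed.

Lemma derivative_zero_eq P p a b : a <= b ->
  (forall u, a <= u <= b -> derivable_pt_lim P u (p u)) ->
  (forall u, a < u < b -> p u = 0) -> P b = P a.
Proof.
  intros Hab HP Hp.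
  assert (Hle : Rabs (P b - P a) <= 0 - 0).
  { apply (Rabs_increment_le P (fun _ => 0) p (fun _ => 0)); auto.
    - intros u _. apply derivable_pt_lim_const.
    - intros u Hu. rewrite Hp, Rabs_R0; auto with real. }
  apply Rabs_le_iff in Hle. lra.
Qed.

Lemma derivative_zero_const P a b : (forall u, derivable_pt_lim P u 0) -> P b = P a.
Proof.
  intros HP. destruct (Rle_dec a b).
  - apply (derivative_zero_eq P (fun _ => 0)); auto.
  - symmetry. apply (derivative_zero_eq P (fun _ => 0)); auto; lra.
Qed.

Lemma continuous_induction (g : R -> R) a b rho : a <= b ->
  (forall r, a <= r <= b -> continuity_pt g r) -> g a < rho ->
  (forall r, a <= r <= b -> (forall s, a <= s <= r -> g s <= rho) -> g r < rho) ->
  forall r, a <= r <= b -> g r < rho.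
Proof.
  intros Hab Hc Ha Hstep.
  set (S := fun r => a <= r <= b /\ forall s, a <= s <= r -> g s <= rho).
  assert (HSa : S a).
  { split; [lra|]. intros s Hs. replace s with a by lra. lra. }
  destruct (completeness S (ex_intro _ b (fun r Hr => proj2 (proj1 Hr))) (ex_intro _ a HSa))
    as [m [Hub Hlub]].
  assert (Ham : a <= m) by (apply Hub, HSa).
  assert (Hmb : m <= b) by (apply Hlub; intros r [Hr _]; lra).
  assert (Hbelow : forall s, a <= s < m -> g s <= rho).
  { intros s Hs. apply NNPP; intro Hgs.
    enough (m <= s) by lra.
    apply Hlub. intros r [Hr Hgr]. destruct (Rle_dec r s) as [|Hrs]; [assumption|].
    exfalso. apply Hgs, Hgr. lra. }
  assert (Hm : g m <= rho).
  { destruct (Req_dec m a) as [->|Hma]; [lra|].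
    apply Rnot_lt_le; intro Hgt.
    destruct (continuity_pt_eps g m (Hc m ltac:(lra)) (g m - rho) ltac:(lra)) as [d [Hd Hgd]].
    set (s := Rmax a (m - d / 2)).
    assert (Hs : a <= s < m) by (split; [apply Rmax_l|apply Rmax_lub_lt; lra]).
    assert (Hsm : Rabs (s - m) < d).
    { rewrite Rabs_left by lra. pose proof (Rmax_r a (m - d / 2)). unfold s in *. lra. }
    pose proof (Hgd s Hsm) as Hgs. apply Rabs_def2 in Hgs. pose proof (Hbelow s Hs). lra. }
  assert (Hupto : forall s, a <= s <= m -> g s <= rho).
  { intros s Hs. destruct (Req_dec s m) as [->|]; [exact Hm|apply Hbelow; lra]. }
  assert (Hgm : g m < rho) by (apply Hstep; [lra|exact Hupto]).
  assert (Hmeq : m = b).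
  { apply NNPP; intro Hmb'.
    destruct (continuity_pt_eps g m (Hc m ltac:(lra)) (rho - g m) ltac:(lra)) as [d [Hd Hgd]].
    set (r := Rmin b (m + d / 2)).
    pose proof (Rmin_l b (m + d / 2)). pose proof (Rmin_r b (m + d / 2)).
    assert (Hr : m < r) by (apply Rmin_glb_lt; lra).
    enough (HSr : S r) by (pose proof (Hub r HSr); lra).
    split; [unfold r in *; lra|]. intros s Hs.
    destruct (Rlt_dec s m); [apply Hbelow; lra|].
    assert (Hsm : Rabs (s - m) < d) by (rewrite Rabs_right; unfold r in *; lra).
    pose proof (Hgd s Hsm) as Hgs. apply Rabs_def2 in Hgs. lra. }
  subst m. intros r Hr. apply Hstep; [exact Hr|]. intros s Hs. apply Hupto. lra.
Qed.

Lemma list_min_pos {A : Type} (l : list A) (h : A -> R) : (forall a, 0 < h a) ->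
  exists m, 0 < m /\ forall a, In a l -> m <= h a.
Proof.
  intros Hh. induction l as [|x l [m [Hm Hml]]].
  - exists 1. split; [lra|intros a []].
  - exists (Rmin m (h x)). split; [now apply Rmin_pos|].
    intros a [<-|Ha]; [apply Rmin_r|]. eapply Rle_trans; [apply Rmin_l|auto].
Qed.

Lemma list_max {A : Type} (l : list A) (h : A -> R) :
  exists M, forall a, In a l -> h a <= M.
Proof.
  induction l as [|x l [M HM]].
  - exists 0. intros a [].
  - exists (Rmax M (h x)). intros a [<-|Ha]; [apply Rmax_r|].
    eapply Rle_trans; [apply HM; auto|apply Rmax_l].
Qed.

Lemma dist2_lt p q d :
  dist2 p q < d <-> Rabs (fst p - fst q) < d /\ Rabs (snd p - snd q) < d.
Proof.
  unfold dist2. split.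
  - intros H. split; eapply Rle_lt_trans; eauto; [apply Rmax_l|apply Rmax_r].
  - intros [H1 H2]. now apply Rmax_lub_lt.
Qed.

Lemma dist2_triangle p q r : dist2 p r <= dist2 p q + dist2 q r.
Proof.
  unfold dist2. apply Rmax_lub.
  - replace (fst p - fst r) with ((fst p - fst q) + (fst q - fst r)) by ring.
    eapply Rle_trans; [apply Rabs_triang|]. apply Rplus_le_compat; apply Rmax_l.
  - replace (snd p - snd r) with ((snd p - snd q) + (snd q - snd r)) by ring.
    eapply Rle_trans; [apply Rabs_triang|]. apply Rplus_le_compat; apply Rmax_r.
Qed.

Lemma dist2_sym p q : dist2 p q = dist2 q p.
Proof. unfold dist2. now rewrite (Rabs_minus_sym (fst p)), (Rabs_minus_sym (snd p)). Qed.

Lemma dist2_refl p : dist2 p p = 0.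
Proof. unfold dist2. rewrite !Rminus_diag, Rabs_R0. apply Rmax_left. lra. Qed.

Lemma Rabs_sub_le_dist4 p q :
  Rabs (pU p - pU q) <= dist4 p q /\ Rabs (pX1 p - pX1 q) <= dist4 p q /\
  Rabs (pX2 p - pX2 q) <= dist4 p q /\ Rabs (pV p - pV q) <= dist4 p q.
Proof.
  unfold dist4. repeat split.
  - eapply Rle_trans; [apply Rmax_l|apply Rmax_l].
  - eapply Rle_trans; [apply Rmax_r|apply Rmax_l].
  - eapply Rle_trans; [apply Rmax_l|apply Rmax_r].
  - eapply Rle_trans; [apply Rmax_r|apply Rmax_r].
Qed.

Lemma dist4_le p q r :
  Rabs (pU p - pU q) <= r -> Rabs (pX1 p - pX1 q) <= r ->
  Rabs (pX2 p - pX2 q) <= r -> Rabs (pV p - pV q) <= r -> dist4 p q <= r.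
Proof. intros; unfold dist4; repeat apply Rmax_lub; assumption. Qed.

Lemma compact_pU_bounded_away K : compact_in dist4 K -> (forall p, K p -> pU p <> 0) ->
  exists c, 0 < c /\ forall p, K p -> c <= Rabs (pU p).
Proof.
  intros HK HK0.
  destruct (HK {c : R | 0 < c} (fun c p => proj1_sig c < Rabs (pU p))) as [l Hl].
  - intros [c Hc] p Hcp. exists (Rabs (pU p) - c). split; [cbn [proj1_sig] in Hcp; lra|].
    intros q Hpq. destruct (Rabs_sub_le_dist4 p q) as [HU _]. cbn [proj1_sig] in *.
    pose proof (Rabs_triang_inv (pU p) (pU q)). lra.
  - intros p Hp. pose proof (Rabs_pos_lt _ (HK0 p Hp)).
    exists (exist (fun c => 0 < c) (Rabs (pU p) / 2) ltac:(lra)). cbn [proj1_sig]. lra.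
  - destruct (list_min_pos l (@proj1_sig _ _) (@proj2_sig _ _)) as [m [Hm Hml]].
    exists m. split; [exact Hm|]. intros p Hp.
    destruct (Hl p Hp) as [c [Hc Hcp]]. pose proof (Hml c Hc). lra.
Qed.

Lemma compact_proj_X K : compact_in dist4 K ->
  compact_in dist2 (fun X => exists U V, K (U, fst X, snd X, V)).
Proof.
  intros HK I O HO Hcov.
  destruct (HK I (fun i p => O i (pX1 p, pX2 p))) as [l Hl].
  - intros i p Hp. destruct (HO i _ Hp) as [r [Hr HOr]]. exists r. split; [exact Hr|].
    intros q Hq. apply HOr. destruct (Rabs_sub_le_dist4 p q) as [_ [H1 [H2 _]]].
    apply dist2_lt; simpl; split; lra.
  - intros [[[U X1] X2] V] Hp. apply Hcov. now exists U, V.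
  - exists l. intros [X1 X2] [U [V HUV]]. exact (Hl _ HUV).
Qed.

(* A finite subcover by [d/2]-balls, on each of which [g] varies by less than [eta/2],
   gives both the uniform modulus [min d / 2] and the bound [max |g(centre)| + eta]. *)
Lemma cont2_uniform_near_compact g Kx : cont2 g -> compact_in dist2 Kx ->
  forall eta, 0 < eta -> exists d, 0 < d /\ exists M, forall X, Kx X -> forall Y, dist2 Y X < d ->
    Rabs (g (fst Y) (snd Y) - g (fst X) (snd X)) < eta /\ Rabs (g (fst Y) (snd Y)) <= M.
Proof.
  intros Hg HK eta Heta.
  set (O := fun (i : (R * R) * {d : R | 0 < d}) Y =>
    let '(P, d) := i in
    (forall a b, Rabs (a - fst P) < proj1_sig d -> Rabs (b - snd P) < proj1_sig d ->
       Rabs (g a b - g (fst P) (snd P)) < eta / 2) /\ dist2 P Y < proj1_sig d / 2).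
  destruct (HK _ O) as [l Hl].
  - intros [P [d Hd]] Y [HP HPY]. cbn [proj1_sig] in *. exists (d / 2 - dist2 P Y). split; [lra|].
    intros Y' HY'. split; [exact HP|]. cbn [proj1_sig]. pose proof (dist2_triangle P Y Y'). lra.
  - intros X HX. destruct (Hg (fst X) (snd X) (eta / 2) ltac:(lra)) as [d [Hd Hgd]].
    exists (X, exist _ d Hd). split; [exact Hgd|]. rewrite dist2_refl. simpl. lra.
  - destruct (list_min_pos l (fun i => proj1_sig (snd i)) (fun i => proj2_sig (snd i)))
      as [m [Hm Hml]].
    destruct (list_max l (fun i => Rabs (g (fst (fst i)) (snd (fst i))))) as [M HM].
    exists (m / 2). split; [lra|]. exists (M + eta).
    intros X HX Y HY. destruct (Hl X HX) as [[P [d Hd]] [Hi [HP HPX]]].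
    pose proof (Hml _ Hi) as Hmd. pose proof (HM _ Hi) as HMP. cbn [proj1_sig fst snd] in *.
    assert (HPY : dist2 P Y < d).
    { pose proof (dist2_triangle P X Y). rewrite (dist2_sym X Y) in *. lra. }
    apply dist2_lt in HPY as [HY1 HY2]. apply dist2_lt in HPX as [HX1 HX2].
    rewrite Rabs_minus_sym in HY1, HY2, HX1, HX2.
    pose proof (HP _ _ HY1 HY2) as HgY.
    pose proof (HP (fst X) (snd X) ltac:(lra) ltac:(lra)) as HgX.
    apply Rabs_def2 in HgY, HgX. split; apply Rabs_le_iff in HMP; [apply Rabs_def1|apply Rabs_le];
      lra.
Qed.

Lemma derivable_pt_lim_jump c h k U : U <> 0 ->
  derivable_pt_lim (fun u => c + h * Heav u + k * Uplus u) U (if Rlt_dec 0 U then k else 0).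
Proof.
  intros HU. destruct (Rlt_dec 0 U) as [Hpos|Hneg].
  - apply derivable_pt_lim_locally_ext
      with (f := fun u => (c + h) + k * u) (a := 0) (b := U + 1); [lra| |].
    + intros u Hu. unfold Heav, Uplus. destruct (Rlt_dec 0 u); [|lra].
      rewrite Rmax_left by lra. ring.
    + pose proof (derivable_pt_lim_plus _ _ U _ _ (derivable_pt_lim_const (c + h) U)
        (derivable_pt_lim_scal _ k U _ (derivable_pt_lim_id U))) as Hd.
      rewrite Rplus_0_l, Rmult_1_r in Hd. exact Hd.
  - apply derivable_pt_lim_locally_ext with (f := fun _ => c) (a := U - 1) (b := 0); [lra| |].
    + intros u Hu. unfold Heav, Uplus. destruct (Rlt_dec 0 u); [lra|].
      rewrite Rmax_right by lra. ring.
    + apply derivable_pt_lim_const.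
Qed.

Lemma Deriv_jump g c h k U : U <> 0 -> (forall u, g u = c + h * Heav u + k * Uplus u) ->
  Deriv g U = if Rlt_dec 0 U then k else 0.
Proof.
  intros HU Hg. apply Deriv_unique.
  apply (derivable_pt_lim_ext (fun u => c + h * Heav u + k * Uplus u)); [auto|].
  now apply derivable_pt_lim_jump.
Qed.

Section Pulse.
Variables (delta : R -> R) (e : R).
Hypotheses (He : 0 < e) (Hdelta_cont : continuity delta)
  (Hdelta_supp : forall u, u < - e \/ e < u -> delta u = 0).

Lemma pulse_flat_before z b u : (forall r, derivable_pt_lim z r (b r * delta r)) ->
  u <= - e -> z u = z (- e).
Proof.
  intros Hz Hu. symmetry. apply (derivative_zero_eq z (fun r => b r * delta r)); auto.
  intros v Hv. rewrite Hdelta_supp; [ring|lra].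
Qed.

Lemma pulse_flat_after z b u : (forall r, derivable_pt_lim z r (b r * delta r)) ->
  e <= u -> z u = z e.
Proof.
  intros Hz Hu. apply (derivative_zero_eq z (fun r => b r * delta r)); auto.
  intros v Hv. rewrite Hdelta_supp; [ring|lra].
Qed.

Lemma pulse_mass_le u v : u <= v ->
  Rint (fun s => Rabs (delta s)) (- e) u <= Rint (fun s => Rabs (delta s)) (- e) v.
Proof.
  intros Huv.
  pose proof (continuity_Rabs_comp delta Hdelta_cont) as Hcont.
  assert (H0 : Rabs (0 - 0) <= Rint (fun s => Rabs (delta s)) (- e) v
                              - Rint (fun s => Rabs (delta s)) (- e) u).
  { apply (Rabs_increment_le (fun _ => 0) _ (fun _ => 0) (fun s => Rabs (delta s))); auto.
    - intros; apply derivable_pt_lim_const.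
    - intros; apply (derivable_pt_lim_Rint (fun s => Rabs (delta s))), Hcont.
    - intros; rewrite Rabs_R0; apply Rabs_pos. }
  rewrite Rminus_diag, Rabs_R0 in H0. lra.
Qed.

(* Comparison of [z - c D] with [eta |D|], where [D] and [|D|] are the primitives of
   [delta] and [|delta|] vanishing at [-e]. *)
Lemma pulse_response z b c eta u : (forall r, derivable_pt_lim z r (b r * delta r)) ->
  - e <= u -> (forall s, - e <= s <= u -> Rabs (b s - c) <= eta) ->
  Rabs (z u - z (- e) - c * Rint delta (- e) u)
    <= eta * Rint (fun s => Rabs (delta s)) (- e) u.
Proof.
  intros Hz Hu Hbc.
  pose proof (continuity_Rabs_comp delta Hdelta_cont) as Hcont.
  pose proof (Rabs_increment_le (fun r => z r - c * Rint delta (- e) r)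
    (fun r => eta * Rint (fun s => Rabs (delta s)) (- e) r)
    (fun r => b r * delta r - c * delta r) (fun r => eta * Rabs (delta r)) (- e) u Hu)
    as Hcmp.
  cbv beta in Hcmp. rewrite !Rint_same in Hcmp.
  replace (z u - z (- e) - c * Rint delta (- e) u)
    with (z u - c * Rint delta (- e) u - (z (- e) - c * 0)) by ring.
  replace (eta * Rint (fun s => Rabs (delta s)) (- e) u)
    with (eta * Rint (fun s => Rabs (delta s)) (- e) u - eta * 0) by ring.
  apply Hcmp.
  - intros r _. apply derivable_pt_lim_minus; [apply Hz|].
    apply derivable_pt_lim_scal, derivable_pt_lim_Rint, Hdelta_cont.
  - intros r _.
    apply derivable_pt_lim_scal, (derivable_pt_lim_Rint (fun s => Rabs (delta s))), Hcont.
  - intros r Hr. replace (b r * delta r - c * delta r) with ((b r - c) * delta r) by ring.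
    rewrite Rabs_mult. apply Rmult_le_compat_r; [apply Rabs_pos|apply Hbc; lra].
Qed.

Lemma pulse_response_total z b c eta theta C :
  (forall r, derivable_pt_lim z r (b r * delta r)) -> z (- e) = 0 -> 0 <= eta ->
  (forall s, - e <= s <= e -> Rabs (b s - c) <= eta) ->
  Rabs (Rint delta (- e) e - 1) <= theta -> Rint (fun s => Rabs (delta s)) (- e) e <= C ->
  Rabs (z e - c) <= eta * C + Rabs c * theta.
Proof.
  intros Hz Hz0 Heta Hbc Htheta HC.
  pose proof (pulse_response z b c eta e Hz ltac:(lra) Hbc) as Hresp. rewrite Hz0 in Hresp.
  replace (z e - c) with ((z e - 0 - c * Rint delta (- e) e) + c * (Rint delta (- e) e - 1))
    by ring.
  eapply Rle_trans; [apply Rabs_triang|]. rewrite Rabs_mult.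
  apply Rplus_le_compat.
  - eapply Rle_trans; [exact Hresp|]. now apply Rmult_le_compat_l.
  - apply Rmult_le_compat_l; [apply Rabs_pos|exact Htheta].
Qed.

End Pulse.

Lemma Deriv_limits f X1 X2 V U : U <> 0 ->
  Deriv (fun u => x1_lim f X1 X2 u) U = (if Rlt_dec 0 U then / 2 * P1_2 f X1 X2 else 0) /\
  Deriv (fun u => x2_lim f X1 X2 u) U = (if Rlt_dec 0 U then / 2 * P2_2 f X1 X2 else 0) /\
  Deriv (fun u => v_lim f X1 X2 V u) U =
    (if Rlt_dec 0 U then / 4 * (P1_2 f X1 X2 ^ 2 + P2_2 f X1 X2 ^ 2) else 0) /\
  Deriv (fun u => w_lim f X1 X2 V u) U =
    (if Rlt_dec 0 U then / 4 * (P1_2 f X1 X2 ^ 2 + P2_2 f X1 X2 ^ 2) else 0).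
Proof.
  intros HU. repeat split.
  - apply (Deriv_jump _ X1 0); [exact HU|intros; unfold x1_lim; ring].
  - apply (Deriv_jump _ X2 0); [exact HU|intros; unfold x2_lim; ring].
  - apply (Deriv_jump _ V (f X1 X2)); [exact HU|intros; reflexivity].
  - apply (Deriv_jump _ V 0); [exact HU|intros; unfold w_lim; ring].
Qed.

Section Transformations.
Variables (f : R -> R -> R) (delta : R -> R -> R) (x1 x2 : R -> R -> R -> R -> R).
Hypotheses (Hf : smooth2 f) (Hdelta : strict_delta_net delta)
  (Hxsmooth : forall e, 0 < e <= 1 -> smooth3 (x1 e) /\ smooth3 (x2 e)).

Lemma cont2_P1_2 : cont2 (P1_2 f).
Proof. now destruct (Hf 1%nat) as [_ [_ [H _]]]. Qed.

Lemma cont2_P2_2 : cont2 (P2_2 f).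
Proof. now destruct (Hf 1%nat) as [_ [_ [_ H]]]. Qed.

Lemma delta_continuous e : 0 < e <= 1 -> continuity (delta e).
Proof. intros He. exact (proj1 (proj1 Hdelta e He) 0%nat). Qed.

Lemma delta_supported e : 0 < e <= 1 -> forall u, u < - e \/ e < u -> delta e u = 0.
Proof. intros He. exact (proj2 (proj1 Hdelta e He)). Qed.

Section Solution.
Variables (e X1 X2 : R).
Hypotheses (He : 0 < e <= 1) (Hode : solves_ode f delta x1 x2 e X1 X2).

Let y1 := x1 e X1 X2.
Let y2 := x2 e X1 X2.
Let z1 := Deriv y1.
Let z2 := Deriv y2.

Lemma y1_derivable u : derivable_pt_lim y1 u (z1 u).
Proof. destruct (proj1 (Hxsmooth e He) 1%nat) as [_ [_ [H _]]]. apply H. Qed.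

Lemma y2_derivable u : derivable_pt_lim y2 u (z2 u).
Proof. destruct (proj2 (Hxsmooth e He) 1%nat) as [_ [_ [H _]]]. apply H. Qed.

Lemma z1_derivable u : derivable_pt_lim z1 u (/ 2 * P1_2 f (y1 u) (y2 u) * delta e u).
Proof. apply (proj1 Hode). Qed.

Lemma z2_derivable u : derivable_pt_lim z2 u (/ 2 * P2_2 f (y1 u) (y2 u) * delta e u).
Proof. apply (proj1 (proj2 Hode)). Qed.

Lemma slope_before u : u <= - e -> z1 u = 0 /\ z2 u = 0.
Proof.
  intros Hu. destruct Hode as [_ [_ [_ [_ [Hz1 Hz2]]]]].
  pose proof (delta_supported e He) as Hsupp.
  rewrite (pulse_flat_before _ _ Hsupp _ _ u z1_derivable Hu),
    (pulse_flat_before _ _ Hsupp _ _ u z2_derivable Hu),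
    <- (pulse_flat_before _ _ Hsupp _ _ (-1) z1_derivable ltac:(lra)),
    <- (pulse_flat_before _ _ Hsupp _ _ (-1) z2_derivable ltac:(lra)).
  split; assumption.
Qed.

Lemma slope_after u : e <= u -> z1 u = z1 e /\ z2 u = z2 e.
Proof.
  intros Hu. pose proof (delta_supported e He) as Hsupp.
  split; [exact (pulse_flat_after _ _ Hsupp _ _ u z1_derivable Hu)
        |exact (pulse_flat_after _ _ Hsupp _ _ u z2_derivable Hu)].
Qed.

Lemma position_start : y1 (- e) = X1 /\ y2 (- e) = X2.
Proof.
  destruct Hode as [_ [_ [Hx1 [Hx2 _]]]]. split.
  - rewrite <- Hx1. apply (derivative_zero_eq y1 z1); [lra|intros; apply y1_derivable|].
    intros v Hv. apply slope_before. lra.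
  - rewrite <- Hx2. apply (derivative_zero_eq y2 z2); [lra|intros; apply y2_derivable|].
    intros v Hv. apply slope_before. lra.
Qed.

Let mass := Rint (fun s => Rabs (delta e s)) (- e) e.

Lemma slope_le u B : - e <= u <= e ->
  (forall s, - e <= s <= u ->
     Rabs (P1_2 f (y1 s) (y2 s)) <= B /\ Rabs (P2_2 f (y1 s) (y2 s)) <= B) ->
  Rabs (z1 u) <= B / 2 * mass /\ Rabs (z2 u) <= B / 2 * mass.
Proof.
  intros Hu HB.
  pose proof (delta_continuous e He) as Hcont.
  assert (HB0 : 0 <= B).
  { destruct (HB (- e)) as [HB1 _]; [lra|].
    pose proof (Rabs_pos (P1_2 f (y1 (- e)) (y2 (- e)))). lra. }
  assert (Hmass : B / 2 * Rint (fun s => Rabs (delta e s)) (- e) u <= B / 2 * mass)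
    by (apply Rmult_le_compat_l; [lra|apply pulse_mass_le; auto; lra]).
  destruct (slope_before (- e) ltac:(lra)) as [Z1 Z2].
  pose proof (pulse_response (delta e) e Hcont _ _ 0 (B / 2) u z1_derivable ltac:(lra)) as R1.
  pose proof (pulse_response (delta e) e Hcont _ _ 0 (B / 2) u z2_derivable ltac:(lra)) as R2.
  rewrite Z1, Rmult_0_l, !Rminus_0_r in R1. rewrite Z2, Rmult_0_l, !Rminus_0_r in R2.
  split; [eapply Rle_trans; [apply R1|exact Hmass]|eapply Rle_trans; [apply R2|exact Hmass]];
    intros s Hs; rewrite Rminus_0_r, Rabs_mult, Rabs_inv, (Rabs_right 2) by lra;
    destruct (HB s Hs); lra.
Qed.

Lemma position_le r B : - e <= r ->
  (forall u, - e <= u <= r -> Rabs (z1 u) <= B /\ Rabs (z2 u) <= B) ->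
  Rabs (y1 r - X1) <= B * (r + e) /\ Rabs (y2 r - X2) <= B * (r + e).
Proof.
  intros Hr HB. destruct position_start as [E1 E2].
  assert (HBx : forall s, derivable_pt_lim (fun x => B * x) s B).
  { intros s. pose proof (derivable_pt_lim_scal _ B s _ (derivable_pt_lim_id s)) as Hd.
    now rewrite Rmult_1_r in Hd. }
  replace (B * (r + e)) with (B * r - B * - e) by ring.
  split; [rewrite <- E1|rewrite <- E2].
  - apply (Rabs_increment_le y1 _ z1 (fun _ => B)); auto using y1_derivable.
    intros u Hu; apply HB; lra.
  - apply (Rabs_increment_le y2 _ z2 (fun _ => B)); auto using y2_derivable.
    intros u Hu; apply HB; lra.
Qed.

(* Bootstrap: while [x_eps] stays in the [rho]-neighbourhood of [X] its slope is at most
   [M C / 2], so it moves by at most [e M C < rho / 2] and cannot leave it. *)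
Lemma position_stays_close M rho C : 0 < rho -> mass <= C -> 2 * e * M * C < rho ->
  (forall a b, dist2 (a, b) (X1, X2) <= rho ->
     Rabs (P1_2 f a b) <= M /\ Rabs (P2_2 f a b) <= M) ->
  forall r, - e <= r <= e -> Rabs (y1 r - X1) <= e * M * C /\ Rabs (y2 r - X2) <= e * M * C.
Proof.
  intros Hrho HC Hsmall HM.
  assert (HM0 : 0 <= M).
  { destruct (HM X1 X2) as [HP1 _]; [rewrite dist2_refl; lra|].
    pose proof (Rabs_pos (P1_2 f X1 X2)). lra. }
  assert (HC0 : 0 <= C).
  { pose proof (pulse_mass_le _ e (delta_continuous e He) (- e) e ltac:(lra)) as Hle.
    rewrite Rint_same in Hle. unfold mass in HC. lra. }
  assert (HeMC : 0 <= e * M * C)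
    by (apply Rmult_le_pos; [apply Rmult_le_pos|]; lra).
  set (G := fun r => Rabs (y1 r - X1) + Rabs (y2 r - X2)).
  assert (Hclose : forall r, - e <= r <= e -> (forall s, - e <= s <= r -> G s <= rho) ->
     Rabs (y1 r - X1) <= e * M * C /\ Rabs (y2 r - X2) <= e * M * C).
  { intros r Hr HG.
    assert (Hslope : forall u, - e <= u <= r ->
              Rabs (z1 u) <= M * C / 2 /\ Rabs (z2 u) <= M * C / 2).
    { intros u Hu.
      assert (HMC : M / 2 * mass <= M * C / 2)
        by (replace (M * C / 2) with (M / 2 * C) by field; apply Rmult_le_compat_l; lra).
      destruct (slope_le u M ltac:(lra)) as [B1 B2]; [|lra].
      intros s Hs. apply HM. pose proof (HG s ltac:(lra)) as HGs. unfold G in HGs.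
      pose proof (Rabs_pos (y1 s - X1)). pose proof (Rabs_pos (y2 s - X2)).
      unfold dist2; simpl. apply Rmax_lub; lra. }
    destruct (position_le r (M * C / 2) ltac:(lra) Hslope) as [B1 B2].
    assert (M * C / 2 * (r + e) <= e * M * C)
      by (assert (0 <= M * C) by (apply Rmult_le_pos; auto); nra).
    lra. }
  assert (HG : forall r, - e <= r <= e -> G r < rho).
  { apply continuous_induction; [lra| | |].
    - intros r _. apply continuity_plus; apply continuity_Rabs_comp, continuity_minus;
        try (apply continuity_const; intros ? ?; reflexivity).
      + exact (continuity_derivable_pt_lim _ _ y1_derivable).
      + exact (continuity_derivable_pt_lim _ _ y2_derivable).
    - destruct position_start as [E1 E2]. unfold G; cbv beta.
      rewrite E1, E2, !Rminus_diag, Rabs_R0. lra.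
    - intros r Hr HGr. destruct (Hclose r Hr HGr). unfold G. lra. }
  intros r Hr. apply Hclose; [exact Hr|]. intros s Hs. left. apply HG. lra.
Qed.

Let energy_density r :=
  (P1_2 f (y1 r) (y2 r) * z1 r + P2_2 f (y1 r) (y2 r) * z2 r) * delta e r.

Lemma energy_density_continuous : continuity energy_density.
Proof.
  pose proof (continuity_derivable_pt_lim _ _ y1_derivable) as Hy1.
  pose proof (continuity_derivable_pt_lim _ _ y2_derivable) as Hy2.
  apply continuity_mult; [|exact (delta_continuous e He)].
  apply continuity_plus; apply continuity_mult.
  - exact (continuity_comp2 _ _ _ cont2_P1_2 Hy1 Hy2).
  - exact (continuity_derivable_pt_lim _ _ z1_derivable).
  - exact (continuity_comp2 _ _ _ cont2_P2_2 Hy1 Hy2).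
  - exact (continuity_derivable_pt_lim _ _ z2_derivable).
Qed.

(* The ODE makes [energy_density] the derivative of [|x_eps'|^2]. *)
Lemma energy_identity u : Rint energy_density (- e) u = z1 u * z1 u + z2 u * z2 u.
Proof.
  set (Phi := fun s => Rint energy_density (- e) s - (z1 s * z1 s + z2 s * z2 s)).
  assert (HPhi : Phi u = Phi (- e)).
  { apply derivative_zero_const. intros s. unfold Phi.
    replace 0 with (energy_density s - ((/ 2 * P1_2 f (y1 s) (y2 s) * delta e s * z1 s
                                         + z1 s * (/ 2 * P1_2 f (y1 s) (y2 s) * delta e s))
                                        + (/ 2 * P2_2 f (y1 s) (y2 s) * delta e s * z2 s
                                         + z2 s * (/ 2 * P2_2 f (y1 s) (y2 s) * delta e s))))
      by (unfold energy_density; field).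
    apply derivable_pt_lim_minus; [apply derivable_pt_lim_Rint, energy_density_continuous|].
    apply derivable_pt_lim_plus; apply derivable_pt_lim_mult;
      auto using z1_derivable, z2_derivable. }
  unfold Phi in HPhi. rewrite Rint_same in HPhi.
  destruct (slope_before (- e) ltac:(lra)) as [Z1 Z2]. rewrite Z1, Z2 in HPhi. lra.
Qed.

Lemma derivable_w_eps V U :
  derivable_pt_lim (fun u => w_eps f delta x1 x2 e X1 X2 V u) U (z1 U * z1 U + z2 U * z2 U).
Proof.
  rewrite <- energy_identity. replace (Rint energy_density (- e) U)
    with (0 + Rint energy_density (- e) U) by ring.
  apply derivable_pt_lim_plus; [apply derivable_pt_lim_const|].
  apply (derivable_pt_lim_Rint (fun s => Rint energy_density (- e) s)).
  exact (continuity_derivable_pt_lim _ _ (fun s =>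
           derivable_pt_lim_Rint _ (- e) s energy_density_continuous)).
Qed.

Lemma derivable_v_eps V U :
  derivable_pt_lim (fun u => v_eps f delta x1 x2 e X1 X2 V u) U
    (z1 U * z1 U + z2 U * z2 U + f (y1 U) (y2 U) * delta e U).
Proof.
  apply derivable_pt_lim_plus; [apply derivable_w_eps|].
  apply (derivable_pt_lim_Rint (fun s => f (y1 s) (y2 s) * delta e s)).
  apply continuity_mult; [|exact (delta_continuous e He)].
  apply continuity_comp2; [exact (Hf 0%nat)| |];
    apply (continuity_derivable_pt_lim _ _ y1_derivable)
    || apply (continuity_derivable_pt_lim _ _ y2_derivable).
Qed.

Lemma slope_after_pulse M rho C d eta theta :
  0 < rho -> mass <= C -> 2 * e * M * C < rho -> e * M * C < d -> 0 <= eta ->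
  (forall a b, dist2 (a, b) (X1, X2) <= rho ->
     Rabs (P1_2 f a b) <= M /\ Rabs (P2_2 f a b) <= M) ->
  (forall a b, dist2 (a, b) (X1, X2) < d ->
     Rabs (P1_2 f a b - P1_2 f X1 X2) <= eta /\ Rabs (P2_2 f a b - P2_2 f X1 X2) <= eta) ->
  Rabs (Rint (delta e) (- e) e - 1) <= theta ->
  Rabs (z1 e - / 2 * P1_2 f X1 X2) <= eta / 2 * C + Rabs (/ 2 * P1_2 f X1 X2) * theta /\
  Rabs (z2 e - / 2 * P2_2 f X1 X2) <= eta / 2 * C + Rabs (/ 2 * P2_2 f X1 X2) * theta.
Proof.
  intros Hrho HC Hsmall Hd Heta HM Hgrad Htheta.
  assert (Hclose : forall s, - e <= s <= e ->
     Rabs (P1_2 f (y1 s) (y2 s) - P1_2 f X1 X2) <= eta /\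
     Rabs (P2_2 f (y1 s) (y2 s) - P2_2 f X1 X2) <= eta).
  { intros s Hs. destruct (position_stays_close M rho C Hrho HC Hsmall HM s Hs) as [B1 B2].
    apply Hgrad, dist2_lt. simpl. lra. }
  pose proof (delta_continuous e He) as Hcont.
  destruct (slope_before (- e) ltac:(lra)) as [Z1 Z2].
  split.
  - apply (pulse_response_total (delta e) e (proj1 He) Hcont _ _ _ (eta / 2) theta C
      z1_derivable Z1); auto; [lra|].
    intros s Hs. rewrite <- Rmult_minus_distr_l, Rabs_mult, Rabs_inv, (Rabs_right 2) by lra.
    destruct (Hclose s Hs). lra.
  - apply (pulse_response_total (delta e) e (proj1 He) Hcont _ _ _ (eta / 2) theta C
      z2_derivable Z2); auto; [lra|].
    intros s Hs. rewrite <- Rmult_minus_distr_l, Rabs_mult, Rabs_inv, (Rabs_right 2) by lra.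
    destruct (Hclose s Hs). lra.
Qed.

Lemma slope_vs_limit U eps M : U < - e \/ e < U -> 0 <= eps <= 1 ->
  Rabs (/ 2 * P1_2 f X1 X2) <= M / 2 -> Rabs (/ 2 * P2_2 f X1 X2) <= M / 2 ->
  Rabs (z1 e - / 2 * P1_2 f X1 X2) <= eps -> Rabs (z2 e - / 2 * P2_2 f X1 X2) <= eps ->
  Rabs (z1 U - if Rlt_dec 0 U then / 2 * P1_2 f X1 X2 else 0) <= eps /\
  Rabs (z2 U - if Rlt_dec 0 U then / 2 * P2_2 f X1 X2 else 0) <= eps /\
  Rabs (z1 U * z1 U + z2 U * z2 U
        - if Rlt_dec 0 U then / 4 * (P1_2 f X1 X2 ^ 2 + P2_2 f X1 X2 ^ 2) else 0)
    <= 2 * eps * (M + 1).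
Proof.
  intros HU Heps HA1 HA2 Hz1 Hz2.
  assert (HM : 0 <= M) by (pose proof (Rabs_pos (/ 2 * P1_2 f X1 X2)); lra).
  destruct (Rlt_dec 0 U) as [Hpos|Hneg].
  - destruct (slope_after U ltac:(lra)) as [-> ->].
    replace (z1 e * z1 e + z2 e * z2 e - / 4 * (P1_2 f X1 X2 ^ 2 + P2_2 f X1 X2 ^ 2))
      with ((z1 e * z1 e - / 2 * P1_2 f X1 X2 * (/ 2 * P1_2 f X1 X2))
          + (z2 e * z2 e - / 2 * P2_2 f X1 X2 * (/ 2 * P2_2 f X1 X2))) by field.
    pose proof (Rabs_sqr_sub_le _ _ _ _ Hz1 HA1 ltac:(lra)).
    pose proof (Rabs_sqr_sub_le _ _ _ _ Hz2 HA2 ltac:(lra)).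
    split; [lra|split; [lra|]].
    eapply Rle_trans; [apply Rabs_triang|]. lra.
  - destruct (slope_before U ltac:(lra)) as [-> ->].
    rewrite !Rmult_0_l, Rplus_0_l, Rminus_0_r, Rabs_R0. repeat split; nra.
Qed.

Lemma dU4_dist_le V U eps M : U < - e \/ e < U -> 0 <= eps <= 1 ->
  Rabs (/ 2 * P1_2 f X1 X2) <= M / 2 -> Rabs (/ 2 * P2_2 f X1 X2) <= M / 2 ->
  Rabs (z1 e - / 2 * P1_2 f X1 X2) <= eps -> Rabs (z2 e - / 2 * P2_2 f X1 X2) <= eps ->
  dist4 (dU4 (t_eps f delta x1 x2 e) (U, X1, X2, V)) (dU4 (t_lim f) (U, X1, X2, V))
    <= 2 * eps * (M + 1) /\
  dist4 (dU4 (s_eps f delta x1 x2 e) (U, X1, X2, V)) (dU4 (s_lim f) (U, X1, X2, V))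
    <= 2 * eps * (M + 1).
Proof.
  intros HU Heps HA1 HA2 Hz1 Hz2.
  destruct (slope_vs_limit U eps M HU Heps HA1 HA2 Hz1 Hz2) as [S1 [S2 S3]].
  destruct (Deriv_limits f X1 X2 V U ltac:(lra)) as [L1 [L2 [Lv Lw]]].
  assert (Hdelta0 : delta e U = 0) by (apply delta_supported; auto).
  assert (HM : 0 <= M) by (pose proof (Rabs_pos (/ 2 * P1_2 f X1 X2)); lra).
  assert (Heps_le : 0 <= eps <= 2 * eps * (M + 1)) by nra.
  simpl. rewrite L1, L2, Lv, Lw.
  rewrite (Deriv_unique _ _ _ (derivable_v_eps V U)), Hdelta0, Rmult_0_r, Rplus_0_r.
  rewrite (Deriv_unique _ _ _ (derivable_w_eps V U)).
  change (Deriv (fun u => x1 e X1 X2 u) U) with (z1 U).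
  change (Deriv (fun u => x2 e X1 X2 u) U) with (z2 U).
  split; apply dist4_le; cbn [pU pX1 pX2 pV]; rewrite ?Rminus_diag, ?Rabs_R0; lra.
Qed.

End Solution.

Lemma grad_bounded_near Kx : compact_in dist2 Kx -> exists rho M, 0 < rho /\ 0 <= M /\
  forall X, Kx X -> forall Y, dist2 Y X <= rho ->
    Rabs (P1_2 f (fst Y) (snd Y)) <= M /\ Rabs (P2_2 f (fst Y) (snd Y)) <= M.
Proof.
  intros HKx.
  destruct (cont2_uniform_near_compact _ _ cont2_P1_2 HKx 1 Rlt_0_1) as [d1 [Hd1 [M1 HM1]]].
  destruct (cont2_uniform_near_compact _ _ cont2_P2_2 HKx 1 Rlt_0_1) as [d2 [Hd2 [M2 HM2]]].
  exists (Rmin d1 d2 / 2), (Rmax 0 (Rmax M1 M2)).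
  pose proof (Rmin_l d1 d2). pose proof (Rmin_r d1 d2). pose proof (Rmin_pos _ _ Hd1 Hd2).
  pose proof (Rmax_l 0 (Rmax M1 M2)). pose proof (Rmax_r 0 (Rmax M1 M2)).
  pose proof (Rmax_l M1 M2). pose proof (Rmax_r M1 M2).
  split; [lra|split; [lra|]].
  intros X HX Y HY.
  destruct (HM1 X HX Y ltac:(lra)) as [_ B1]. destruct (HM2 X HX Y ltac:(lra)) as [_ B2].
  split; lra.
Qed.

Lemma grad_uniform_near Kx : compact_in dist2 Kx -> forall eta, 0 < eta ->
  exists d, 0 < d /\ forall X, Kx X -> forall Y, dist2 Y X < d ->
    Rabs (P1_2 f (fst Y) (snd Y) - P1_2 f (fst X) (snd X)) <= eta /\
    Rabs (P2_2 f (fst Y) (snd Y) - P2_2 f (fst X) (snd X)) <= eta.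
Proof.
  intros HKx eta Heta.
  destruct (cont2_uniform_near_compact _ _ cont2_P1_2 HKx eta Heta) as [d1 [Hd1 [M1 HU1]]].
  destruct (cont2_uniform_near_compact _ _ cont2_P2_2 HKx eta Heta) as [d2 [Hd2 [M2 HU2]]].
  exists (Rmin d1 d2). split; [now apply Rmin_pos|].
  intros X HX Y HY. apply Rmin_Rgt in HY as [HY1 HY2].
  split; left; [apply (HU1 X HX Y HY1)|apply (HU2 X HX Y HY2)].
Qed.

Hypothesis Hxode : forall K : R * R -> Prop, compact_in dist2 K ->
  exists eK, 0 < eK /\ forall e X1 X2, 0 < e <= 1 -> e <= eK -> K (X1, X2) ->
    solves_ode f delta x1 x2 e X1 X2.

Lemma slope_after_pulse_uniform Kx : compact_in dist2 Kx -> forall eps, 0 < eps ->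
  exists e0, 0 < e0 /\ forall e X1 X2, 0 < e <= 1 -> e < e0 -> Kx (X1, X2) ->
    solves_ode f delta x1 x2 e X1 X2 /\
    Rabs (Deriv (x1 e X1 X2) e - / 2 * P1_2 f X1 X2) <= eps /\
    Rabs (Deriv (x2 e X1 X2) e - / 2 * P2_2 f X1 X2) <= eps.
Proof.
  intros HKx eps Heps.
  destruct (Hxode Kx HKx) as [eK [HeK Hsol]].
  destruct (grad_bounded_near Kx HKx) as [rho [M [Hrho [HM0 HM]]]].
  destruct Hdelta as [_ [Hint [C [HC [e1 [He1 Hmass]]]]]].
  destruct (Hint (eps / (M + 1)) ltac:(apply Rdiv_lt_0_compat; lra)) as [e2 [He2 Hint1]].
  destruct (grad_uniform_near Kx HKx (eps / C) ltac:(apply Rdiv_lt_0_compat; lra))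
    as [d [Hd Hunif]].
  set (MC := M * C + 1).
  assert (HMC : M * C < MC) by (unfold MC; lra).
  assert (HMC0 : 0 < MC) by (pose proof (Rmult_le_pos _ _ HM0 (Rlt_le _ _ HC)); unfold MC; lra).
  exists (Rmin (Rmin eK e1) (Rmin e2 (Rmin (rho / (2 * MC)) (d / MC)))).
  split; [repeat apply Rmin_pos; auto; apply Rdiv_lt_0_compat; lra|].
  intros e X1 X2 He Hee HX.
  apply Rmin_Rgt in Hee as [Hee Hee']. apply Rmin_Rgt in Hee as [HeK' He1'].
  apply Rmin_Rgt in Hee' as [He2' Hee']. apply Rmin_Rgt in Hee' as [Herho Hed].
  apply (Rmult_lt_compat_r (2 * MC)) in Herho; [|lra].
  apply (Rmult_lt_compat_r MC) in Hed; [|lra].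
  unfold Rdiv in Herho, Hed. rewrite Rmult_assoc, Rinv_l in Herho, Hed by lra.
  pose proof (Hsol e X1 X2 He ltac:(lra) HX) as Hode.
  assert (HeMC : e * M * C < e * MC) by (rewrite Rmult_assoc; apply Rmult_lt_compat_l; lra).
  destruct (slope_after_pulse e X1 X2 He Hode M rho C d (eps / C) (eps / (M + 1)) Hrho
    (Hmass e He He1') ltac:(lra) ltac:(lra) ltac:(apply Rlt_le, Rdiv_lt_0_compat; lra)
    (fun a b Hab => HM (X1, X2) HX (a, b) Hab) (fun a b Hab => Hunif (X1, X2) HX (a, b) Hab)
    (Rlt_le _ _ (Hint1 e He He2'))) as [S1 S2].
  destruct (HM (X1, X2) HX (X1, X2) ltac:(rewrite dist2_refl; lra)) as [HP1 HP2].
  assert (Hbound : forall P, Rabs P <= M ->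
    eps / C / 2 * C + Rabs (/ 2 * P) * (eps / (M + 1)) <= eps).
  { intros P HP. rewrite Rabs_mult, Rabs_inv, (Rabs_right 2) by lra.
    replace (eps / C / 2 * C) with (eps / 2) by (field; lra).
    assert (Ht : eps = (M + 1) * (eps / (M + 1))) by (field; lra).
    assert (0 < eps / (M + 1)) by (apply Rdiv_lt_0_compat; lra).
    nra. }
  split; [exact Hode|split].
  - apply (Rle_trans _ _ _ S1), Hbound, HP1.
  - apply (Rle_trans _ _ _ S2), Hbound, HP2.
Qed.

Lemma dU4_close_on_compact K : compact_in dist4 K -> (forall p, K p -> pU p <> 0) ->
  forall eta, 0 < eta -> exists e0, 0 < e0 /\ forall e p, 0 < e <= 1 -> e < e0 -> K p ->
    dist4 (dU4 (t_eps f delta x1 x2 e) p) (dU4 (t_lim f) p) < eta /\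
    dist4 (dU4 (s_eps f delta x1 x2 e) p) (dU4 (s_lim f) p) < eta.
Proof.
  intros HK HK0 eta Heta.
  destruct (compact_pU_bounded_away K HK HK0) as [c [Hc Hcp]].
  pose proof (compact_proj_X K HK) as HKx.
  destruct (grad_bounded_near _ HKx) as [rho [M [Hrho [HM0 HM]]]].
  set (eps := Rmin 1 (eta / (4 * (M + 1)))).
  assert (Heps : 0 < eps) by (apply Rmin_pos; [lra|apply Rdiv_lt_0_compat; lra]).
  assert (Heps_eta : 2 * eps * (M + 1) < eta).
  { pose proof (Rmin_r 1 (eta / (4 * (M + 1)))) as Hr. fold eps in Hr.
    apply (Rmult_le_compat_r (M + 1)) in Hr; [|lra].
    replace (eta / (4 * (M + 1)) * (M + 1)) with (eta / 4) in Hr by (field; lra). lra. }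
  destruct (slope_after_pulse_uniform _ HKx eps Heps) as [e0 [He0 Hslope]].
  exists (Rmin c e0). split; [now apply Rmin_pos|].
  intros e [[[U X1] X2] V] He Hee HKp. apply Rmin_Rgt in Hee as [Hec Hee0].
  assert (HX : exists U' V', K (U', fst (X1, X2), snd (X1, X2), V')) by (exists U, V; exact HKp).
  destruct (Hslope e X1 X2 He Hee0 HX) as [Hode [Hz1 Hz2]].
  destruct (HM _ HX (X1, X2) ltac:(rewrite dist2_refl; lra)) as [HP1 HP2].
  pose proof (Hcp _ HKp) as HU. simpl in HU.
  assert (Hhalf : forall P, Rabs P <= M -> Rabs (/ 2 * P) <= M / 2)
    by (intros P HP; rewrite Rabs_mult, Rabs_inv, (Rabs_right 2) by lra; lra).
  destruct (dU4_dist_le e X1 X2 He Hode V U eps M) as [Ht Hs]; auto.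
  - revert HU. unfold Rabs. destruct (Rcase_abs U); lra.
  - pose proof (Rmin_l 1 (eta / (4 * (M + 1)))) as Hl. fold eps in Hl. lra.
  - split; lra.
Qed.

End Transformations.

Theorem proposition7p1
  (f : R -> R -> R) (delta : R -> R -> R) (x1 x2 : R -> R -> R -> R -> R)
  (Hf : smooth2 f)
  (Hdelta : strict_delta_net delta)
  (Hxsmooth : forall e, 0 < e <= 1 -> smooth3 (x1 e) /\ smooth3 (x2 e))
  (Hxode : forall K : R * R -> Prop, compact_in dist2 K ->
     exists eK, 0 < eK /\
       forall e X1 X2, 0 < e <= 1 -> e <= eK -> K (X1, X2) ->
         solves_ode f delta x1 x2 e X1 X2) :
  unif_cv_on_compacts (fun e => dU4 (t_eps f delta x1 x2 e)) (dU4 (t_lim f))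
    (fun p => pU p <> 0) /\
  unif_cv_on_compacts (fun e => dU4 (s_eps f delta x1 x2 e)) (dU4 (s_lim f))
    (fun p => pU p <> 0).
Proof.
  split; intros K HK HK0 eta Heta;
    destruct (dU4_close_on_compact f delta x1 x2 Hf Hdelta Hxsmooth Hxode K HK HK0 eta Heta)
      as [e0 [He0 Hclose]];
    exists e0; split; auto; intros e p He Hee Hp; apply (Hclose e p He Hee Hp).
Qed.
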